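(* Let $\Sigma\in\mathbb{R}^{p\times p}$ with $\Sigma\succ0$, $\theta_0\in\mathbb{R}^p$ with $s_0=\|\theta_0\|_0$, $\xi>0$, and let $\widehat\theta^\infty=\widehat\theta^\infty(\xi)$ be the unique minimizer of $\theta\mapsto\frac12\langle\theta-\theta_0,\Sigma(\theta-\theta_0)\rangle+\xi\|\theta\|_1$. Then $$\|\widehat\theta^\infty\|_0\le\Big(1+\frac{4\|\Sigma\|_2}{\kappa(s_0,1)}\Big)s_0.$$
   Context: $\kappa(s,c_0)=\min_{J\subseteq[p],|J|\le s}\ \min_{u\in\mathbb{R}^p,\ \|u_{J^c}\|_1\le c_0\|u_J\|_1}\frac{\langle u,\Sigma u\rangle}{\|u\|_2^2}$; $\|\cdot\|_0$ counts nonzero entries; $\|\Sigma\|_2$ is the spectral norm. *)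

From mathcomp Require Import all_boot all_order all_algebra.
From mathcomp Require Import boolp classical_sets reals.
Set Implicit Arguments. Unset Strict Implicit. Unset Printing Implicit Defensive.
Import Order.TTheory GRing.Theory Num.Theory.
Local Open Scope ring_scope.
Local Open Scope classical_set_scope.

Section Defs.
Variables (R : realType) (p : nat).

Definition dotv (u v : 'cV[R]_p) : R := \sum_(i < p) u i 0 * v i 0.

Definition quadf (S : 'M[R]_p) (u : 'cV[R]_p) : R := dotv u (S *m u).

Definition l1norm (u : 'cV[R]_p) : R := \sum_(i < p) `|u i 0|.
Definition l1on (J : {set 'I_p}) (u : 'cV[R]_p) : R := \sum_(i in J) `|u i 0|.

Definition l0norm (u : 'cV[R]_p) : nat := #|[set i : 'I_p | u i 0 != 0]|.

Definition l2norm (u : 'cV[R]_p) : R := Num.sqrt (dotv u u).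

Definition specnorm (S : 'M[R]_p) : R :=
  sup [set r : R | exists u : 'cV[R]_p, u != 0 /\ r = l2norm (S *m u) / l2norm u].

Definition kappa (S : 'M[R]_p) (s : nat) (c0 : R) : R :=
  inf [set r : R | exists (J : {set 'I_p}) (u : 'cV[R]_p),
         [/\ (#|J| <= s)%N, u != 0, l1on (~: J) u <= c0 * l1on J u
           & r = quadf S u / dotv u u]].

Definition lasso_obj (S : 'M[R]_p) (theta0 : 'cV[R]_p) (xi : R) (theta : 'cV[R]_p) : R :=
  2^-1 * quadf S (theta - theta0) + xi * l1norm theta.

Definition posdef (S : 'M[R]_p) : Prop :=
  S^T = S /\ forall u : 'cV[R]_p, u != 0 -> 0 < quadf S u.

End Defs.

From mathcomp Require Import all_boot all_order all_algebra.
From mathcomp Require Import boolp classical_sets reals.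
From mathcomp Require Import ring lra.

(* Write Delta = thetahat - theta0 and J = supp theta0, s0 = |J|.  On the support
   of thetahat the KKT conditions force |(Sigma Delta)_i| = xi, hence
   xi^2 ||thetahat||_0 <= ||Sigma Delta||^2 <= ||Sigma||_2 <Delta, Sigma Delta>
   (Cauchy-Schwarz for the form of Sigma).  Comparing the objective at thetahat
   and at theta0 gives the basic inequality
   <Delta, Sigma Delta> <= 2 xi (||Delta_J||_1 - ||Delta_J^c||_1),
   so Delta lies in the cone defining kappa(s0, 1), and
   <Delta, Sigma Delta>^2 <= 4 xi^2 ||Delta_J||_1^2 <= 4 xi^2 s0 ||Delta||^2
                         <= 4 xi^2 s0 <Delta, Sigma Delta> / kappa.
   Hence xi^2 ||thetahat||_0 <= 4 xi^2 s0 ||Sigma||_2 / kappa. *)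

Set Implicit Arguments.
Unset Strict Implicit.
Unset Printing Implicit Defensive.

Import Order.TTheory GRing.Theory Num.Theory.
Local Open Scope ring_scope.

Section InnerProduct.
Variables (R : realType) (p : nat).
Implicit Types (u v w : 'cV[R]_p) (A S : 'M[R]_p).

Lemma dotvC u v : dotv u v = dotv v u.
Proof. by apply: eq_bigr => i _; rewrite mulrC. Qed.

Lemma dotvDl u w v : dotv (u + w) v = dotv u v + dotv w v.
Proof. by rewrite /dotv -big_split; apply: eq_bigr => i _; rewrite mxE mulrDl. Qed.

Lemma dotvZl (a : R) u v : dotv (a *: u) v = a * dotv u v.
Proof. by rewrite /dotv mulr_sumr; apply: eq_bigr => i _; rewrite mxE mulrA. Qed.

Lemma dotvDr u w v : dotv v (u + w) = dotv v u + dotv v w.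
Proof. by rewrite dotvC dotvDl !(dotvC v). Qed.

Lemma dotvZr (a : R) u v : dotv v (a *: u) = a * dotv v u.
Proof. by rewrite dotvC dotvZl dotvC. Qed.

Lemma dotv0r v : dotv v 0 = 0.
Proof. by rewrite /dotv big1 // => i _; rewrite mxE mulr0. Qed.

Lemma dotv_ge0 v : 0 <= dotv v v.
Proof. by apply: sumr_ge0 => i _; rewrite -expr2 sqr_ge0. Qed.

Lemma dotv_gt0 v : v != 0 -> 0 < dotv v v.
Proof.
move=> vN0; rewrite lt_neqAle dotv_ge0 andbT eq_sym; apply: contra vN0 => /eqP v0.
apply/eqP/matrixP => i j; rewrite (ord1 j) [RHS]mxE.
have sq_ge0 k : xpredT k -> 0 <= v k 0 * v k 0 by rewrite -expr2 sqr_ge0.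
by have /eqP := (psumr_eq0P sq_ge0 v0 (i:=i) isT); rewrite mulf_eq0 orbb => /eqP.
Qed.

Lemma dotv_mulmx A u v : dotv u (A *m v) = dotv (A^T *m u) v.
Proof.
rewrite /dotv; under eq_bigr => i _ do rewrite mxE big_distrr /=.
rewrite exchange_big /=; apply: eq_bigr => j _.
by rewrite mxE big_distrl /=; apply: eq_bigr => i _; rewrite mxE; ring.
Qed.

Lemma dotv_delta u (i : 'I_p) : dotv u (delta_mx i 0) = u i 0.
Proof.
rewrite /dotv (bigD1 i) //= big1 ?addr0; first by rewrite mxE !eqxx mulr1.
by move=> j ji; rewrite mxE (negbTE ji) mulr0.
Qed.

Lemma l2norm_sqr u : l2norm u ^+ 2 = dotv u u.
Proof. by rewrite sqr_sqrtr // dotv_ge0. Qed.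

Lemma quadfDZ S u v (t : R) : S^T = S ->
  quadf S (u + t *: v) = quadf S u + 2 * t * dotv u (S *m v) + t ^+ 2 * quadf S v.
Proof.
move=> S_sym; rewrite /quadf mulmxDr -scalemxAr !(dotvDl, dotvDr, dotvZl, dotvZr).
have -> : dotv v (S *m u) = dotv u (S *m v) by rewrite dotv_mulmx S_sym dotvC.
ring.
Qed.

Lemma quadratic_ge0_discr (a b c : R) : 0 <= c ->
  (forall t, 0 <= a + 2 * t * b + t ^+ 2 * c) -> b ^+ 2 <= a * c.
Proof.
move=> c_ge0 Hq; have [c_gt0|] := ltrP 0 c.
  have := Hq (- b / c).
  have -> : a + 2 * (- b / c) * b + (- b / c) ^+ 2 * c = a - b ^+ 2 / c.
    by field; rewrite gt_eqF.
  by rewrite subr_ge0 ler_pdivrMr.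
move=> c_le0; have c0 : c = 0 by apply/eqP; rewrite eq_le c_le0 c_ge0.
rewrite c0 mulr0 in Hq *; have [-> |b_neq0] := eqVneq b 0; first by rewrite expr0n.
have := Hq (- (a + 1) / (2 * b)).
have -> : a + 2 * (- (a + 1) / (2 * b)) * b + (- (a + 1) / (2 * b)) ^+ 2 * 0 = -1.
  by field; rewrite b_neq0.
by rewrite oppr_ge0 ler10.
Qed.

Lemma cauchy_schwarz_quadf S u v : S^T = S -> (forall w, 0 <= quadf S w) ->
  dotv u (S *m v) ^+ 2 <= quadf S u * quadf S v.
Proof. by move=> S_sym S_psd; apply: quadratic_ge0_discr => // t; rewrite -quadfDZ. Qed.

Lemma cauchy_schwarz_dotv u v : dotv u v ^+ 2 <= dotv u u * dotv v v.
Proof.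
have := @cauchy_schwarz_quadf 1%:M u v (trmx1 _ _).
by rewrite /quadf !mul1mx; apply=> w; rewrite /quadf mul1mx dotv_ge0.
Qed.

Lemma dotv_le_l2norm u v : dotv u v <= l2norm u * l2norm v.
Proof.
rewrite /l2norm -sqrtrM ?dotv_ge0 //; apply: le_trans (ler_norm _) _.
by rewrite -sqrtr_sqr ler_wsqrtr // cauchy_schwarz_dotv.
Qed.

Lemma l1on_sqr_le (J : {set 'I_p}) u : l1on J u ^+ 2 <= #|J|%:R * dotv u u.
Proof.
pose v : 'cV[R]_p := \col_i (i \in J)%:R.
pose w : 'cV[R]_p := \col_i (if i \in J then `|u i 0| else 0).
have vw : dotv v w = l1on J u.
  rewrite /l1on /dotv [RHS]big_mkcond /=; apply: eq_bigr => i _.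
  by rewrite !mxE; case: (i \in J); rewrite ?mul1r ?mul0r.
have vv : dotv v v = #|J|%:R.
  rewrite /dotv -sumr_const [RHS]big_mkcond /=; apply: eq_bigr => i _.
  by rewrite !mxE; case: (i \in J); rewrite ?mul1r ?mul0r.
have ww : dotv w w <= dotv u u.
  apply: ler_sum => i _; rewrite !mxE; case: (i \in J).
    by rewrite -normrM ger0_norm // -expr2 sqr_ge0.
  by rewrite mul0r -expr2 sqr_ge0.
by rewrite -vw (le_trans (cauchy_schwarz_dotv v w)) // vv ler_wpM2l.
Qed.

End InnerProduct.

Section SpectralNorm.
Variables (R : realType) (p : nat).
Implicit Types (u v : 'cV[R]_p) (A S : 'M[R]_p).

Lemma mulmx_dotv_bounded A :
  exists C, forall u, dotv (A *m u) (A *m u) <= C * dotv u u.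
Proof.
exists (\sum_(i < p) \sum_(j < p) A i j * A i j) => u.
rewrite big_distrl /=; apply: ler_sum => i _.
have -> : (A *m u) i 0 = dotv (row i A)^T u.
  by rewrite mxE; apply: eq_bigr => j _; rewrite !mxE.
have -> : \sum_(j < p) A i j * A i j = dotv (row i A)^T (row i A)^T.
  by apply: eq_bigr => j _; rewrite !mxE.
by rewrite -expr2 cauchy_schwarz_dotv.
Qed.

Lemma mulmx_l2norm_le A u : l2norm (A *m u) <= specnorm A * l2norm u.
Proof.
have [-> | uN0] := eqVneq u 0; first by rewrite mulmx0 /l2norm dotv0r sqrtr0 mulr0.
have u_gt0 : 0 < l2norm u by rewrite sqrtr_gt0 dotv_gt0.
rewrite -ler_pdivrMr //; apply: ub_le_sup; last by exists u.
have [C HC] := mulmx_dotv_bounded A.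
exists (Num.sqrt C) => _ [v [vN0 ->]].
rewrite ler_pdivrMr ?sqrtr_gt0 ?dotv_gt0 // /l2norm mulrC -sqrtrM ?dotv_ge0 //.
by rewrite ler_wsqrtr // mulrC HC.
Qed.

Lemma quadf_le_specnorm A u : quadf A u <= specnorm A * dotv u u.
Proof.
rewrite /quadf; apply: le_trans (dotv_le_l2norm _ _) _.
rewrite -l2norm_sqr expr2 mulrCA ler_wpM2l ?sqrtr_ge0 //.
exact: mulmx_l2norm_le.
Qed.

Lemma dotv_mulmx_le_specnorm_quadf S u : S^T = S -> (forall v, 0 <= quadf S v) ->
  dotv (S *m u) (S *m u) <= specnorm S * quadf S u.
Proof.
move=> S_sym S_psd; have [Su0 | SuN0] := eqVneq (S *m u) 0.
  by rewrite /quadf Su0 !dotv0r mulr0.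
have N_gt0 := dotv_gt0 SuN0.
have := cauchy_schwarz_quadf u (S *m u) S_sym S_psd.
rewrite dotv_mulmx S_sym.
have := quadf_le_specnorm S (S *m u); have := S_psd u.
set N := dotv _ _; set Q := quadf S u; set P := specnorm S; set T := quadf S _.
move=> Q_ge0 TN NQT; rewrite -(ler_pM2l N_gt0) -expr2 (le_trans NQT) //.
have -> : N * (P * Q) = Q * (P * N) by ring.
exact: ler_wpM2l.
Qed.

End SpectralNorm.

Section PositiveDefinite.
Variables (R : realType) (p : nat) (S : 'M[R]_p).
Hypothesis S_pd : posdef S.

Lemma posdef_psd u : 0 <= quadf S u.
Proof.
have [-> | uN0] := eqVneq u 0; first by rewrite /quadf mulmx0 dotv0r.
exact/ltW/S_pd.2.
Qed.

Lemma posdef_unitmx : S \in unitmx.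
Proof.
case: S_pd => S_sym S_pos; rewrite unitmxE unitfE; apply/negP => /det0P [v vN0 vS].
have vtN0 : v^T != 0 by apply: contra vN0 => /eqP vt0; rewrite -[v]trmxK vt0 trmx0.
have := S_pos _ vtN0; rewrite /quadf.
by rewrite -[in S *m _]S_sym -trmx_mul vS trmx0 dotv0r ltxx.
Qed.

(* With W := S^-1, Cauchy-Schwarz for the form of S gives
   <u, u>^2 = <u, S (W u)>^2 <= <u, S u> <W u, u> <= <u, S u> ||W||_2 <u, u>. *)
Lemma posdef_rayleigh_lb :
  exists2 c : R, 0 < c & forall u, u != 0 -> c <= quadf S u / dotv u u.
Proof.
case: (S_pd) => S_sym _; set W := invmx S.
exists (1 + `|specnorm W|)^-1; first by rewrite invr_gt0 ltr_pwDl.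
move=> u uN0; have d_gt0 := dotv_gt0 uN0.
have SWu : S *m (W *m u) = u by rewrite mulmxA mulmxV ?mul1mx // posdef_unitmx.
have := cauchy_schwarz_quadf u (W *m u) S_sym posdef_psd.
rewrite {2}/quadf SWu dotvC -/(quadf W u).
have := quadf_le_specnorm W u; have := posdef_psd u.
set d := dotv u u; set Q := quadf S u; set P := specnorm W => Q_ge0 qW cs.
rewrite ler_pdivlMr // mulrC ler_pdivrMr ?ltr_pwDl // -(ler_pM2l d_gt0) -expr2.
apply: (le_trans cs); rewrite mulrCA ler_wpM2l // mulrC.
apply: (le_trans qW); apply: ler_wpM2r; first exact: ltW.
exact: ler_wpDl (ler_norm P).
Qed.

End PositiveDefinite.

Section CompatibilityConstant.
Variables (R : realType) (p : nat) (S : 'M[R]_p) (s : nat) (c0 : R).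
Variables (J : {set 'I_p}) (u : 'cV[R]_p).
Hypotheses (J_le : (#|J| <= s)%N) (uN0 : u != 0) (u_cone : l1on (~: J) u <= c0 * l1on J u).

Lemma kappa_le_rayleigh : (forall v, 0 <= quadf S v) -> kappa S s c0 <= quadf S u / dotv u u.
Proof.
move=> S_psd; apply: ge_inf; last by exists J, u.
by exists 0 => _ [K [v [_ vN0 _ ->]]]; rewrite divr_ge0 ?dotv_ge0.
Qed.

Lemma kappa_gt0 : posdef S -> 0 < kappa S s c0.
Proof.
move=> S_pd; have [c c_gt0 c_le] := posdef_rayleigh_lb S_pd.
apply: lt_le_trans c_gt0 _; apply: lb_le_inf; first by exists (quadf S u / dotv u u), J, u.
by move=> _ [K [v [_ vN0 _ ->]]]; apply: c_le.
Qed.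

End CompatibilityConstant.

Section RealLemmas.
Variable R : realType.

Lemma le0_of_le_small_mulr (b c d : R) :
  0 < b -> (forall s, 0 < s -> s < b -> d <= s * c) -> d <= 0.
Proof.
move=> b_gt0 Hd; rewrite leNgt; apply/negP => d_gt0.
have c1_gt0 : 0 < `|c| + 1 by rewrite ltr_pwDr.
pose s := Num.min (b / 2) (d / (`|c| + 1)).
have s_gt0 : 0 < s by rewrite lt_min !divr_gt0.
have s_lt_b : s < b by rewrite gt_min ltr_pdivrMr // ltr_pMr // ltr1n.
have s_le : s * (`|c| + 1) <= d by rewrite -ler_pdivlMr // ge_min lexx orbT.
have := Hd s s_gt0 s_lt_b; have := ler_norm c; nra.
Qed.

Lemma l1_stationary_le_norm (a b c xi : R) : b != 0 ->
  (forall t, 0 <= t * a + t ^+ 2 * c / 2 + xi * (`|b + t| - `|b|)) -> xi <= `|a|.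
Proof.
move=> bN0 Hmin; have [b_gt0 | b_le0] := ltrP 0 b.
  suff : a + xi <= 0 by move=> h; rewrite -normrN; apply: le_trans (ler_norm _); lra.
  apply: (le0_of_le_small_mulr (c := c / 2) b_gt0) => s s_gt0 s_lt_b.
  have := Hmin (- s); rewrite sqrrN (gtr0_norm b_gt0) ger0_norm; last by lra.
  move=> h; rewrite -subr_ge0 -(pmulr_rge0 _ s_gt0); lra.
have b_lt0 : b < 0 by rewrite lt_neqAle bN0.
suff : xi - a <= 0 by move=> h; apply: le_trans (ler_norm a); lra.
have nb_gt0 : 0 < - b by rewrite oppr_gt0.
apply: (le0_of_le_small_mulr (c := c / 2) nb_gt0) => s s_gt0 s_lt_b.
have := Hmin s; rewrite (ltr0_norm b_lt0) ler0_norm; last by lra.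
move=> h; rewrite -subr_ge0 -(pmulr_rge0 _ s_gt0); lra.
Qed.

End RealLemmas.

Section Lasso.
Variables (R : realType) (p : nat) (S : 'M[R]_p) (theta0 th : 'cV[R]_p) (xi : R).
Hypotheses (S_sym : S^T = S) (S_psd : forall u, 0 <= quadf S u) (xi_gt0 : 0 < xi).
Hypothesis th_min : forall theta, lasso_obj S theta0 xi th <= lasso_obj S theta0 xi theta.
Implicit Types (u : 'cV[R]_p) (J : {set 'I_p}).

Definition supp u : {set 'I_p} := [set i | u i 0 != 0].

Lemma l0normE u : l0norm u = #|supp u|.
Proof. by apply: eq_card => i; rewrite inE; apply/idP/idP => [/set_mem | /mem_set]. Qed.

Lemma l1normD_delta u i (t : R) :
  l1norm (u + t *: delta_mx i 0) = l1norm u + (`|u i 0 + t| - `|u i 0|).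
Proof.
rewrite /l1norm (bigD1 i) //= [in RHS](bigD1 i) //= !mxE !eqxx mulr1.
under eq_bigr => j ji do rewrite !mxE (negbTE ji) mulr0 addr0.
lra.
Qed.

Lemma l1norm_split J u : l1norm u = l1on J u + l1on (~: J) u.
Proof.
rewrite /l1norm (bigID (mem J)) /=; congr (_ + _).
by apply: eq_bigl => i; rewrite finset.in_setC.
Qed.

Lemma l1on_ge0 J u : 0 <= l1on J u.
Proof. by apply: sumr_ge0 => i _; apply: normr_ge0. Qed.

Lemma lasso_kkt i : th i 0 != 0 -> xi <= `|(S *m (th - theta0)) i 0|.
Proof.
move=> thi_neq0; apply: (l1_stationary_le_norm (c := quadf S (delta_mx i 0)) thi_neq0) => t.
have := th_min (th + t *: delta_mx i 0).
rewrite /lasso_obj l1normD_delta addrAC quadfDZ // dotv_mulmx S_sym dotv_delta.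
lra.
Qed.

Lemma lasso_l0norm_le :
  (l0norm th)%:R * xi ^+ 2 <= dotv (S *m (th - theta0)) (S *m (th - theta0)).
Proof.
rewrite l0normE mulr_natl -sumr_const /dotv [leRHS](bigID (mem (supp th))) /=.
rewrite -[leLHS]addr0 lerD //; last by apply: sumr_ge0 => i _; rewrite -expr2 sqr_ge0.
apply: ler_sum => i; rewrite inE => /lasso_kkt xi_le.
rewrite expr2 (le_trans (ler_pM (ltW xi_gt0) (ltW xi_gt0) xi_le xi_le)) //.
by rewrite -normrM ger0_norm // -expr2 sqr_ge0.
Qed.

Let J0 := supp theta0.
Let Delta := th - theta0.

Lemma lasso_basic_ineq : quadf S Delta <= 2 * xi * (l1on J0 Delta - l1on (~: J0) Delta).
Proof.
have := th_min theta0; rewrite /lasso_obj subrr /quadf mulmx0 dotv0r mulr0 add0r.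
rewrite (l1norm_split J0 th) (l1norm_split J0 theta0).
have -> : l1on (~: J0) theta0 = 0.
  by apply: big1 => i; rewrite finset.in_setC inE negbK => /eqP ->; rewrite normr0.
have -> : l1on (~: J0) th = l1on (~: J0) Delta.
  by apply: eq_bigr => i; rewrite finset.in_setC inE negbK => /eqP thi0; rewrite !mxE thi0 subr0.
have : l1on J0 theta0 - l1on J0 th <= l1on J0 Delta.
  by rewrite /l1on -sumrB; apply: ler_sum => i _; rewrite !mxE distrC lerB_dist.
rewrite -/(quadf S Delta) => J0_le; have := ltW xi_gt0; nra.
Qed.

Lemma lasso_error_cone : l1on (~: J0) Delta <= 1 * l1on J0 Delta.
Proof.
have := le_trans (S_psd Delta) lasso_basic_ineq.
by rewrite mul1r pmulr_rge0 ?subr_ge0 // mulr_gt0.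
Qed.

Lemma lasso_quadf_mul_kappa_le :
  quadf S Delta * kappa S (l0norm theta0) 1 <= 4 * xi ^+ 2 * (l0norm theta0)%:R.
Proof.
set Q := quadf S Delta; set K := kappa S _ 1; set s0 := (l0norm theta0)%:R.
have rhs_ge0 : 0 <= 4 * xi ^+ 2 * s0 by rewrite mulr_ge0 ?ler0n // mulr_ge0 // sqr_ge0.
have [D0 | DN0] := eqVneq Delta 0.
  by rewrite /Q D0 /quadf mulmx0 dotv0r mul0r.
have [K_le0 | K_gt0] := lerP K 0; first exact: le_trans (mulr_ge0_le0 (S_psd Delta) K_le0) rhs_ge0.
have D_gt0 := dotv_gt0 DN0.
have KD_le : K * dotv Delta Delta <= Q.
  rewrite -ler_pdivlMr //; apply: kappa_le_rayleigh DN0 lasso_error_cone S_psd.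
  by rewrite l0normE.
have L_le : l1on J0 Delta ^+ 2 <= s0 * dotv Delta Delta by rewrite /s0 l0normE l1on_sqr_le.
have Q_le : Q <= 2 * xi * l1on J0 Delta.
  apply: (le_trans lasso_basic_ineq); apply: ler_wpM2l; first by rewrite mulr_ge0 // ltW.
  by rewrite lerBlDr lerDl l1on_ge0.
have := S_psd Delta; have := l1on_ge0 J0 Delta; rewrite -/Q; nra.
Qed.

End Lasso.

Theorem lemma3p1 (R : realType) (p : nat) (Sigma : 'M[R]_p) (theta0 : 'cV[R]_p)
  (xi : R) (thetahat : 'cV[R]_p) :
  posdef Sigma -> 0 < xi ->
  (forall theta : 'cV[R]_p,
     lasso_obj Sigma theta0 xi thetahat <= lasso_obj Sigma theta0 xi theta) ->
  (l0norm thetahat)%:R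
    <= (1 + 4 * specnorm Sigma / kappa Sigma (l0norm theta0) 1) * (l0norm theta0)%:R.
Proof.
move=> S_pd xi_gt0 th_min; have S_psd := posdef_psd S_pd; have [S_sym S_pos] := S_pd.
set Delta := thetahat - theta0.
set m := (l0norm thetahat)%:R; set s0 := (l0norm theta0)%:R.
set P := specnorm Sigma; set K := kappa Sigma _ 1; set Q := quadf Sigma Delta.
have m_le := lasso_l0norm_le S_sym xi_gt0 th_min; rewrite -/Delta -/m in m_le.
have [D0 | DN0] := eqVneq Delta 0.
  have th_eq : thetahat = theta0 by apply/eqP; rewrite -subr_eq0 -/Delta D0.
  rewrite D0 mulmx0 dotv0r pmulr_lle0 ?exprn_gt0 // in m_le.
  have m0 : m = 0 by apply/eqP; rewrite eq_le m_le ler0n.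
  by rewrite /s0 -th_eq -/m m0 mulr0.
have N_le := dotv_mulmx_le_specnorm_quadf Delta S_sym S_psd; rewrite -/P -/Q in N_le.
have QK_le := lasso_quadf_mul_kappa_le S_psd xi_gt0 th_min; rewrite -/Delta -/K -/Q -/s0 in QK_le.
have K_gt0 : 0 < K.
  by apply: kappa_gt0 DN0 (lasso_error_cone S_psd xi_gt0 th_min) S_pd; rewrite l0normE.
have Q_gt0 : 0 < Q := S_pos _ DN0.
have P_ge0 : 0 <= P.
  rewrite -(pmulr_lge0 _ Q_gt0) (le_trans _ (le_trans m_le N_le)) //.
  by rewrite mulr_ge0 ?ler0n ?sqr_ge0.
have m_le_ratio : m <= 4 * P / K * s0.
  rewrite mulrAC ler_pdivlMr // -(ler_pM2r (exprn_gt0 2 xi_gt0)).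
  have := ler_wpM2r (ltW K_gt0) (le_trans m_le N_le).
  have := ler_wpM2l P_ge0 QK_le.
  nra.
by apply: (le_trans m_le_ratio); apply: ler_wpM2r; rewrite ?ler0n // lerDr.
Qed.
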